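(* Let $\tau$ be a $\sigma$-maxitive measure on a $\sigma$-algebra $\mathcal{B}$ of subsets of a nonempty set $E$. Then the following are equivalent: - $\tau$ has the Radon–Nikodym property with respect to the Sugeno integral, i.e. for every $\sigma$-maxitive measure $\nu$ on $\mathcal{B}$ with $\nu\ll_\wedge\tau$ there is a $\mathcal{B}$-measurable $c:E\to[0,\infty]$ with $\nu(B)=\sup_{t\ge0}\min\big(t,\tau(B\cap\{c>t\})\big)$ for all $B\in\mathcal{B}$; - $\tau$ is $\sigma$-principal.
   Context: A $\sigma$-maxitive measure on $\mathcal{B}$ is a map $\nu:\mathcal{B}\to[0,\infty]$ with $\nu(\emptyset)=0$ and $\nu(\bigcup_j B_j)=\sup_j\nu(B_j)$ for every countable family $(B_j)$ in $\mathcal{B}$. A map $f:E\to[0,\infty]$ is $\mathcal{B}$-measurable if $\{f>t\}\in\mathcal{B}$ for all $t\in[0,\infty)$. Here the pseudo-multiplication is $\odot=\min$, whose identity is $\infty$; every element of $[0,\infty]$ is $\odot$-finite in this case. Absolute continuity $\nu\ll_\wedge\tau$ means $\nu(B)\le\min(\infty,\tau(B))=\tau(B)$ for all $B\in\mathcal{B}$. A $\sigma$-ideal of $\mathcal{B}$ is a nonempty subfamily closed under countable unions and under passing to measurable subsets. A set is $\tau$-negligible if it is contained in some $B\in\mathcal{B}$ with $\tau(B)=0$. $\tau$ is $\sigma$-principal if for every $\sigma$-ideal $\mathcal{I}$ of $\mathcal{B}$ there is $L\in\mathcal{I}$ such that $S\setminus L$ is $\tau$-negligible for all $S\in\mathcal{I}$.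 *)

From Stdlib Require Import Reals.
Open Scope R_scope.

(* Extended reals R U {+oo}; values in [0,oo] are enforced by nonnegativity hypotheses. *)
Inductive Rbar : Type := Fin (x : R) | PInf.

Definition Rbar_le (a b : Rbar) : Prop :=
  match a, b with
  | Fin x, Fin y => x <= y
  | _, PInf => True
  | PInf, Fin _ => False
  end.

Definition Rbar_lt (a b : Rbar) : Prop :=
  match a, b with
  | Fin x, Fin y => x < y
  | Fin _, PInf => True
  | PInf, _ => False
  end.

Definition Rbar_min (a b : Rbar) : Rbar :=
  match a, b with
  | Fin x, Fin y => Fin (Rmin x y)
  | Fin x, PInf => Fin x
  | PInf, b => b
  end.

Definition is_sup (S : Rbar -> Prop) (l : Rbar) : Prop :=
  (forall a, S a -> Rbar_le a l) /\
  (forall u, (forall a, S a -> Rbar_le a u) -> Rbar_le l u).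

Definition emptyset {E : Type} : E -> Prop := fun _ => False.
Definition setI {E : Type} (A C : E -> Prop) : E -> Prop := fun x => A x /\ C x.
Definition setD {E : Type} (A C : E -> Prop) : E -> Prop := fun x => A x /\ ~ C x.
Definition bigcup {E : Type} (F : nat -> E -> Prop) : E -> Prop :=
  fun x => exists j, F j x.
Definition subset {E : Type} (A C : E -> Prop) : Prop := forall x, A x -> C x.

Definition sigma_algebra {E : Type} (B : (E -> Prop) -> Prop) : Prop :=
  B (fun _ => True) /\
  (forall A, B A -> B (fun x => ~ A x)) /\
  (forall F : nat -> E -> Prop, (forall j, B (F j)) -> B (bigcup F)).

Definition sigma_maxitive {E : Type} (B : (E -> Prop) -> Prop)
  (nu : (E -> Prop) -> Rbar) : Prop :=
  (forall A, B A -> Rbar_le (Fin 0) (nu A)) /\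
  nu emptyset = Fin 0 /\
  (forall F : nat -> E -> Prop, (forall j, B (F j)) ->
     is_sup (fun a => exists j, a = nu (F j)) (nu (bigcup F))).

Definition measurable_fun {E : Type} (B : (E -> Prop) -> Prop) (f : E -> Rbar) : Prop :=
  (forall x, Rbar_le (Fin 0) (f x)) /\
  (forall t : R, 0 <= t -> B (fun x => Rbar_lt (Fin t) (f x))).

(* absolute continuity nu <<_min tau : nu(A) <= min(oo, tau(A)) = tau(A) *)
Definition abs_cont_min {E : Type} (B : (E -> Prop) -> Prop)
  (nu tau : (E -> Prop) -> Rbar) : Prop :=
  forall A, B A -> Rbar_le (nu A) (Rbar_min PInf (tau A)).

Definition sugeno_density {E : Type} (tau : (E -> Prop) -> Rbar) (c : E -> Rbar)
  (A : E -> Prop) (v : Rbar) : Prop :=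
  is_sup (fun a => exists t : R, 0 <= t /\
            a = Rbar_min (Fin t) (tau (setI A (fun x => Rbar_lt (Fin t) (c x))))) v.

Definition radon_nikodym_sugeno {E : Type} (B : (E -> Prop) -> Prop)
  (tau : (E -> Prop) -> Rbar) : Prop :=
  forall nu, sigma_maxitive B nu -> abs_cont_min B nu tau ->
    exists c : E -> Rbar, measurable_fun B c /\
      forall A, B A -> sugeno_density tau c A (nu A).

Definition sigma_ideal {E : Type} (B : (E -> Prop) -> Prop)
  (I : (E -> Prop) -> Prop) : Prop :=
  (forall A, I A -> B A) /\
  (exists A, I A) /\
  (forall F : nat -> E -> Prop, (forall j, I (F j)) -> I (bigcup F)) /\
  (forall A S, I S -> B A -> subset A S -> I A).

Definition negligible {E : Type} (B : (E -> Prop) -> Prop)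
  (tau : (E -> Prop) -> Rbar) (N : E -> Prop) : Prop :=
  exists A, B A /\ tau A = Fin 0 /\ subset N A.

Definition sigma_principal {E : Type} (B : (E -> Prop) -> Prop)
  (tau : (E -> Prop) -> Rbar) : Prop :=
  forall I, sigma_ideal B I ->
    exists L, I L /\ forall S, I S -> negligible B tau (setD S L).

From Stdlib Require Import Reals ZArith Lra Lia Classical FunctionalExtensionality
  PropExtensionality IndefiniteDescription ClassicalEpsilon.
Open Scope R_scope.

(* (principal => densities)  Given nu << tau, for every nonnegative rational q
   the sets of nu-measure <= q form a σ-ideal; σ-principality yields a set
   K_q in it containing every member up to a tau-null set.  The density is
   c(x) = sup ({0} ∪ {q | x ∉ K_q}), so {c > t} is the countable union of the
   complements of K_q, q > t.  Each Sugeno term is bounded by nu(A) because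
   outside K_q a set either has nu-measure > q or is tau-null; conversely nu(A)
   is bounded by the Sugeno integral by splitting A along {c > q}.

   (densities => principal)  Given a σ-ideal I, the "quotient" measure
   nu(A) = inf_{S ∈ I} tau(A \ S) is σ-maxitive, nu << tau and nu vanishes on I.
   For its density c, every S ∈ I is tau-null on {c > 0}, and nu({c <= 0}) = 0
   provides one L ∈ I with tau({c <= 0} \ L) = 0; this L is the principal set. *)

Lemma Rbar_le_refl (a : Rbar) : Rbar_le a a.
Proof. destruct a; simpl; auto; lra. Qed.

Lemma Rbar_le_trans (a b c : Rbar) : Rbar_le a b -> Rbar_le b c -> Rbar_le a c.
Proof. destruct a, b, c; simpl; auto; try lra; tauto. Qed.

Lemma Rbar_le_antisym (a b : Rbar) : Rbar_le a b -> Rbar_le b a -> a = b.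
Proof. destruct a, b; simpl; try tauto; intros; f_equal; lra. Qed.

Lemma Rbar_not_le_lt (a b : Rbar) : ~ Rbar_le a b -> Rbar_lt b a.
Proof. destruct a, b; simpl; try tauto; intros; lra. Qed.

Lemma Rbar_lt_not_le (a b : Rbar) : Rbar_lt a b -> ~ Rbar_le b a.
Proof. destruct a, b; simpl; try tauto; intros; lra. Qed.

Lemma Rbar_lt_le (a b : Rbar) : Rbar_lt a b -> Rbar_le a b.
Proof. destruct a, b; simpl; try tauto; intros; lra. Qed.

Lemma Rbar_lt_le_trans (a b c : Rbar) : Rbar_lt a b -> Rbar_le b c -> Rbar_lt a c.
Proof. destruct a, b, c; simpl; try tauto; intros; lra. Qed.

Lemma Rbar_le_lt_trans (a b c : Rbar) : Rbar_le a b -> Rbar_lt b c -> Rbar_lt a c.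
Proof. destruct a, b, c; simpl; try tauto; intros; lra. Qed.

Lemma Rbar_le_PInf (a : Rbar) : Rbar_le a PInf.
Proof. destruct a; exact I. Qed.

Lemma Rbar_min_le_l (t : R) (b : Rbar) : Rbar_le (Rbar_min (Fin t) b) (Fin t).
Proof. destruct b; simpl; [apply Rmin_l | lra]. Qed.

Lemma Rbar_min_le_r (t : R) (b : Rbar) : Rbar_le (Rbar_min (Fin t) b) b.
Proof. destruct b; simpl; auto. apply Rmin_r. Qed.

Lemma Rbar_min_le_compat_l (t r : R) (b : Rbar) :
  t <= r -> Rbar_le (Rbar_min (Fin t) b) (Rbar_min (Fin r) b).
Proof. destruct b; simpl; auto. intros. unfold Rmin; repeat destruct Rle_dec; lra. Qed.

Lemma Rbar_min_0_l (b : Rbar) : Rbar_le (Fin 0) b -> Rbar_min (Fin 0) b = Fin 0.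
Proof. destruct b; simpl; auto. intros; f_equal; apply Rmin_left; auto. Qed.

Lemma Rbar_min_le_below (t v : R) (b : Rbar) :
  Rbar_le (Rbar_min (Fin t) b) (Fin v) -> v < t -> Rbar_le b (Fin v).
Proof. destruct b; simpl; auto; try lra. unfold Rmin; destruct Rle_dec; lra. Qed.

Lemma Rbar_le_of_eps (a : Rbar) (v : R) :
  (forall eps, 0 < eps -> Rbar_le a (Fin (v + eps))) -> Rbar_le a (Fin v).
Proof.
  intro H. destruct a as [y|].
  - simpl. apply Rnot_lt_le; intro Hlt. specialize (H ((y - v) / 2)). simpl in H. lra.
  - apply (H 1); lra.
Qed.

Lemma inv_succ_pos (n : nat) : 0 < / INR (S n).
Proof. apply Rinv_0_lt_compat, lt_0_INR; lia. Qed.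

Lemma inv_succ_lt (eps : R) : 0 < eps -> exists n, / INR (S n) < eps.
Proof.
  intro He. destruct (archimed_cor1 eps He) as [N [HN1 HN2]].
  exists (pred N). replace (S (pred N)) with N by lia. exact HN1.
Qed.

Lemma Rbar_le_of_inv_succ (a : Rbar) :
  (forall n, Rbar_le a (Fin (/ INR (S n)))) -> Rbar_le a (Fin 0).
Proof.
  intro H. apply Rbar_le_of_eps. intros eps He. destruct (inv_succ_lt eps He) as [n Hn].
  apply (Rbar_le_trans _ _ _ (H n)). change (/ INR (S n) <= 0 + eps). lra.
Qed.

Lemma Rbar_pos_inv_succ (a : Rbar) :
  Rbar_lt (Fin 0) a <-> exists n, Rbar_lt (Fin (/ INR (S n))) a.
Proof.
  split.
  - destruct a as [y|]; intro Ha.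
    + destruct (inv_succ_lt y Ha) as [n Hn]. exists n; exact Hn.
    + exists 0%nat; exact I.
  - intros [n Hn]. apply (Rbar_le_lt_trans _ (Fin (/ INR (S n)))); auto.
    change (0 <= / INR (S n)). left; apply inv_succ_pos.
Qed.

Definition is_inf (S : Rbar -> Prop) (l : Rbar) : Prop :=
  (forall a, S a -> Rbar_le l a) /\
  (forall u, (forall a, S a -> Rbar_le u a) -> Rbar_le u l).

Lemma sup_exists (T : Rbar -> Prop) : T (Fin 0) -> exists l, is_sup T l.
Proof.
  intro H0.
  destruct (classic (exists M, forall a, T a -> Rbar_le a (Fin M))) as [[M HM]|HN].
  - destruct (completeness (fun y => T (Fin y))) as [m [Hm1 Hm2]].
    + exists M. intros y Hy. exact (HM _ Hy).
    + exists 0; auto.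
    + exists (Fin m). split.
      * intros [y|] Ha; [apply Hm1; auto | exact (HM _ Ha)].
      * intros [w|] Hu; [|exact I]. apply Hm2. intros y Hy. exact (Hu _ Hy).
  - exists PInf. split.
    + intros; apply Rbar_le_PInf.
    + intros [w|] Hu; [|exact I]. exfalso; apply HN; exists w; auto.
Qed.

Lemma inf_exists (T : Rbar -> Prop) :
  (exists a, T a) -> (forall a, T a -> Rbar_le (Fin 0) a) -> exists l, is_inf T l.
Proof.
  intros [a0 Ha0] Hpos.
  destruct (classic (exists x, T (Fin x))) as [[x0 Hx0]|HN].
  - destruct (completeness (fun y => T (Fin (- y)))) as [m [Hm1 Hm2]].
    + exists 0. intros y Hy. specialize (Hpos _ Hy). simpl in Hpos. lra.
    + exists (- x0). rewrite Ropp_involutive; auto.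
    + exists (Fin (- m)). split.
      * intros [y|] Ha; [|exact I]. simpl.
        assert (- y <= m) by (apply Hm1; rewrite Ropp_involutive; auto). lra.
      * intros [w|] Hu.
        -- simpl. assert (m <= - w); [|lra]. apply Hm2. intros y Hy.
           specialize (Hu _ Hy). simpl in Hu. lra.
        -- exact (Hu _ Hx0).
  - exists PInf. split.
    + intros [y|] Ha; [exfalso; apply HN; eauto | exact I].
    + intros; apply Rbar_le_PInf.
Qed.

Definition Rbar_sup (T : Rbar -> Prop) : Rbar := epsilon (inhabits (Fin 0)) (is_sup T).
Definition Rbar_inf (T : Rbar -> Prop) : Rbar := epsilon (inhabits (Fin 0)) (is_inf T).

Lemma Rbar_sup_spec (T : Rbar -> Prop) : T (Fin 0) -> is_sup T (Rbar_sup T).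
Proof. intro H. unfold Rbar_sup. apply epsilon_spec, sup_exists, H. Qed.

Lemma Rbar_inf_spec (T : Rbar -> Prop) :
  (exists a, T a) -> (forall a, T a -> Rbar_le (Fin 0) a) -> is_inf T (Rbar_inf T).
Proof. intros H1 H2. unfold Rbar_inf. apply epsilon_spec, inf_exists; auto. Qed.

Lemma inf_approx (T : Rbar -> Prop) (l : Rbar) (v eps : R) :
  is_inf T l -> Rbar_le l (Fin v) -> 0 < eps -> exists a, T a /\ Rbar_le a (Fin (v + eps)).
Proof.
  intros [_ Hglb] Hl He. apply NNPP; intro HN.
  assert (Rbar_le (Fin (v + eps)) l) as Hge.
  { apply Hglb. intros a Ha. apply Rbar_lt_le, Rbar_not_le_lt. intro; apply HN; eauto. }
  apply (Rbar_le_trans _ _ _ Hge) in Hl. simpl in Hl; lra.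
Qed.

Lemma set_ext {E : Type} (X Y : E -> Prop) : (forall x, X x <-> Y x) -> X = Y.
Proof. intro H; apply functional_extensionality; intro x; apply propositional_extensionality; auto. Qed.

Definition union2 {E : Type} (X Y : E -> Prop) : nat -> E -> Prop :=
  fun k => match k with 0%nat => X | _ => Y end.

Lemma setI_bigcup {E : Type} (A : E -> Prop) (F : nat -> E -> Prop) :
  setI A (bigcup F) = bigcup (fun j => setI A (F j)).
Proof. apply set_ext; intro x; unfold setI, bigcup; split; [intros [h [j hj]] | intros [j [h hj]]]; eauto. Qed.

Section SigmaAlgebra.
Context {E : Type} (B : (E -> Prop) -> Prop) (HB : sigma_algebra B).

Lemma B_compl (A : E -> Prop) : B A -> B (fun x => ~ A x).
Proof. apply HB. Qed.

Lemma B_bigcup (F : nat -> E -> Prop) : (forall j, B (F j)) -> B (bigcup F).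
Proof. apply HB. Qed.

(* Classically, a set defined by a proposition not depending on the point is
   the whole space or empty, hence measurable. *)
Lemma B_const (P : Prop) : B (fun _ : E => P).
Proof.
  destruct (classic P) as [HP|HP].
  - replace (fun _ : E => P) with (fun _ : E => True) by (apply set_ext; tauto). apply HB.
  - replace (fun _ : E => P) with (fun x : E => ~ (fun _ : E => True) x)
      by (apply set_ext; tauto).
    apply B_compl, HB.
Qed.

Lemma B_empty : B emptyset.
Proof. exact (B_const False). Qed.

Lemma B_union2 (X Y : E -> Prop) : B X -> B Y -> B (bigcup (union2 X Y)).
Proof. intros; apply B_bigcup; intros [|j]; simpl; auto. Qed.

Lemma B_setI (X Y : E -> Prop) : B X -> B Y -> B (setI X Y).
Proof.
  intros HX HY.
  replace (setI X Y) with
    (fun x => ~ (bigcup (union2 (fun x => ~ X x) (fun x => ~ Y x))) x).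
  - apply B_compl, B_union2; apply B_compl; auto.
  - apply set_ext. intro x. unfold setI, bigcup, union2. split.
    + intro H1. split; apply NNPP; intro; apply H1; [exists 0%nat|exists 1%nat]; auto.
    + intros [h1 h2] [[|j] hj]; auto.
Qed.

Lemma B_setD (X Y : E -> Prop) : B X -> B Y -> B (setD X Y).
Proof. intros. apply B_setI; auto. apply B_compl; auto. Qed.

End SigmaAlgebra.

Section MaxitiveMeasure.
Context {E : Type} (B : (E -> Prop) -> Prop) (m : (E -> Prop) -> Rbar)
  (Hm : sigma_maxitive B m).

Lemma m_nonneg (X : E -> Prop) : B X -> Rbar_le (Fin 0) (m X).
Proof. apply Hm. Qed.

Lemma m_empty : m emptyset = Fin 0.
Proof. apply Hm. Qed.

Lemma m_bigcup_le (F : nat -> E -> Prop) (w : Rbar) :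
  (forall j, B (F j)) -> (forall j, Rbar_le (m (F j)) w) -> Rbar_le (m (bigcup F)) w.
Proof. intros HF Hw. apply (proj2 (proj2 (proj2 Hm) F HF)). intros a [j ->]; auto. Qed.

Lemma m_mono (X Y : E -> Prop) : B X -> B Y -> subset X Y -> Rbar_le (m X) (m Y).
Proof.
  intros HX HY Hs.
  assert (bigcup (union2 X Y) = Y) as Heq.
  { apply set_ext; intro x; unfold bigcup, union2; split.
    - intros [[|j] h]; auto.
    - intro; exists 1%nat; auto. }
  assert (HU := proj1 (proj2 (proj2 Hm) (union2 X Y) ltac:(intros [|j]; auto))).
  rewrite Heq in HU. apply HU. exists 0%nat; auto.
Qed.

Lemma m_min_bigcup_le (F : nat -> E -> Prop) (t : R) (w : Rbar) :
  (forall j, B (F j)) -> (forall j, Rbar_le (Rbar_min (Fin t) (m (F j))) w) ->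
  Rbar_le (Rbar_min (Fin t) (m (bigcup F))) w.
Proof.
  intros HF Hw. destruct w as [a|]; [|apply Rbar_le_PInf].
  destruct (Rle_dec t a).
  - apply (Rbar_le_trans _ _ _ (Rbar_min_le_l _ _)). simpl; auto.
  - apply (Rbar_le_trans _ _ _ (Rbar_min_le_r _ _)). apply m_bigcup_le; auto.
    intro j. apply (Rbar_min_le_below t); auto. lra.
Qed.

End MaxitiveMeasure.

(* The nonnegative rationals q = m/(n+1), dense in [0,oo). *)
Definition rat (m n : nat) : R := INR m / INR (S n).

Lemma rat_nonneg (m n : nat) : 0 <= rat m n.
Proof. unfold rat. apply Rmult_le_pos; [apply pos_INR | left; apply inv_succ_pos]. Qed.

Lemma rat_dense (a b : R) : 0 <= a -> a < b -> exists m n, a < rat m n < b.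
Proof.
  intros Ha Hab.
  destruct (archimed_cor1 (b - a)) as [N [HN1 HN2]]; [lra|].
  set (n := pred N). assert (HSn : INR (S n) = INR N) by (f_equal; unfold n; lia).
  assert (HNp : 0 < INR N) by (apply lt_0_INR; lia).
  destruct (archimed (a * INR N)) as [Hu1 Hu2].
  assert (Hz : (0 < up (a * INR N))%Z).
  { apply lt_IZR. assert (0 <= a * INR N) by (apply Rmult_le_pos; lra). lra. }
  exists (Z.to_nat (up (a * INR N))), n. unfold rat. rewrite HSn.
  rewrite INR_IZR_INZ, Z2Nat.id by lia.
  set (u := IZR (up (a * INR N))) in *.
  split.
  - apply (Rmult_lt_reg_r (INR N)); auto. unfold Rdiv. rewrite Rmult_assoc, Rinv_l by lra. lra.
  - assert (u / INR N <= a + / INR N).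
    { apply (Rmult_le_reg_r (INR N)); auto. unfold Rdiv. rewrite Rmult_assoc, Rinv_l by lra.
      rewrite Rmult_plus_distr_r, Rinv_l by lra. lra. }
    lra.
Qed.

Section PrincipalDensity.
Context {E : Type} (B : (E -> Prop) -> Prop) (HB : sigma_algebra B)
  (tau nu : (E -> Prop) -> Rbar) (Htau : sigma_maxitive B tau)
  (Hnu : sigma_maxitive B nu).

Definition sublevel (q : R) (A : E -> Prop) : Prop := B A /\ Rbar_le (nu A) (Fin q).

Lemma sublevel_ideal (q : R) : 0 <= q -> sigma_ideal B (sublevel q).
Proof.
  intro Hq. unfold sublevel. split; [|split; [|split]].
  - intros A [h _]; auto.
  - exists emptyset. split; [apply B_empty; auto|]. rewrite (m_empty B nu Hnu). simpl; auto.
  - intros F HF. split; [apply B_bigcup; auto; intro j; apply HF|].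
    apply (m_bigcup_le B nu Hnu); intro j; apply HF.
  - intros A S [HS1 HS2] HA Hs. split; auto.
    apply (Rbar_le_trans _ _ _ (m_mono B nu Hnu A S HA HS1 Hs) HS2).
Qed.

Variable K : nat -> nat -> E -> Prop.
Hypothesis HK : forall m n, sublevel (rat m n) (K m n) /\
  forall S, sublevel (rat m n) S -> negligible B tau (setD S (K m n)).

Lemma K_measurable (m n : nat) : B (K m n).
Proof. apply HK. Qed.

Definition cut (t : R) (m n : nat) : E -> Prop :=
  setI (fun _ => t < rat m n) (fun x => ~ K m n x).

Definition above (t : R) : E -> Prop := bigcup (fun m => bigcup (fun n => cut t m n)).

Lemma cut_measurable (t : R) (m n : nat) : B (cut t m n).
Proof. unfold cut. apply B_setI; [exact HB | apply B_const, HB | apply B_compl, K_measurable; exact HB]. Qed.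

Lemma above_measurable (t : R) : B (above t).
Proof. unfold above. apply B_bigcup; auto; intro m. apply B_bigcup; auto; intro n. apply cut_measurable. Qed.

Definition density (x : E) : Rbar :=
  Rbar_sup (fun a => a = Fin 0 \/ exists m n, ~ K m n x /\ a = Fin (rat m n)).

Lemma density_spec (x : E) :
  is_sup (fun a => a = Fin 0 \/ exists m n, ~ K m n x /\ a = Fin (rat m n)) (density x).
Proof. apply Rbar_sup_spec. left; auto. Qed.

Lemma density_level (t : R) : 0 <= t -> (fun x => Rbar_lt (Fin t) (density x)) = above t.
Proof.
  intro Ht. apply set_ext; intro x; unfold above, bigcup, cut, setI; split.
  - intro Hlt. apply NNPP; intro HN. apply (Rbar_lt_not_le _ _ Hlt), (proj2 (density_spec x)).
    intros a [->|[m [n [h1 ->]]]]; simpl; auto.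
    apply Rnot_lt_le; intro. apply HN; eauto.
  - intros [m [n [h1 h2]]]. apply (Rbar_lt_le_trans _ (Fin (rat m n))); [exact h1|].
    apply (proj1 (density_spec x)). right; eauto.
Qed.

Lemma density_measurable : measurable_fun B density.
Proof.
  split.
  - intro x. apply (proj1 (density_spec x)). left; auto.
  - intros t Ht. rewrite density_level; auto. apply above_measurable.
Qed.

(* Outside K m n, a set has nu-measure > rat m n or is tau-null. *)
Lemma outside_principal_bound (m n : nat) (Y : E -> Prop) :
  B Y -> (forall x, Y x -> ~ K m n x) -> Rbar_le (Rbar_min (Fin (rat m n)) (tau Y)) (nu Y).
Proof.
  intros HY Hdis. destruct (classic (Rbar_le (nu Y) (Fin (rat m n)))) as [h|h].
  - destruct (proj2 (HK m n) Y (conj HY h)) as [Z [HZ [HZ0 HZs]]].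
    apply (Rbar_le_trans _ _ _ (Rbar_min_le_r _ _)).
    apply (Rbar_le_trans _ (tau Z)).
    + apply (m_mono B tau Htau); auto. intros x hx. apply HZs. split; auto.
    + rewrite HZ0. apply (m_nonneg B nu Hnu); auto.
  - apply Rbar_not_le_lt in h. apply (Rbar_le_trans _ _ _ (Rbar_min_le_l _ _)).
    destruct (nu Y); simpl in *; auto; lra.
Qed.

Lemma sugeno_term_le (A : E -> Prop) (t : R) :
  B A -> 0 <= t -> Rbar_le (Rbar_min (Fin t) (tau (setI A (above t)))) (nu A).
Proof.
  intros HA Ht. unfold above. rewrite setI_bigcup.
  apply (m_min_bigcup_le B tau Htau).
  { intro m. apply B_setI; auto.
    apply B_bigcup; auto; intro n; apply cut_measurable. }
  intro m. rewrite setI_bigcup. apply (m_min_bigcup_le B tau Htau).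
  { intro n. apply B_setI; auto; apply cut_measurable. }
  intro n. assert (HY : B (setI A (cut t m n))) by (apply B_setI; auto; apply cut_measurable).
  destruct (Rlt_dec t (rat m n)) as [Hq|Hq].
  - apply (Rbar_le_trans _ _ _ (Rbar_min_le_compat_l t (rat m n) _ ltac:(lra))).
    apply (Rbar_le_trans _ (nu (setI A (cut t m n)))).
    + apply outside_principal_bound; auto. intros x [_ [_ h]]; exact h.
    + apply (m_mono B nu Hnu); auto. intros x [h _]; exact h.
  - replace (setI A (cut t m n)) with (@emptyset E)
      by (apply set_ext; intro x; unfold emptyset, cut, setI; tauto).
    rewrite (m_empty B tau Htau).
    apply (Rbar_le_trans _ _ _ (Rbar_min_le_r _ _)). apply (m_nonneg B nu Hnu); auto.
Qed.

Lemma nu_le_sugeno_bound (A : E -> Prop) (v : R) :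
  abs_cont_min B nu tau -> B A ->
  (forall t, 0 <= t -> Rbar_le (Rbar_min (Fin t) (tau (setI A (above t)))) (Fin v)) ->
  Rbar_le (nu A) (Fin v).
Proof.
  intros Hac HA Hu.
  assert (Hv : 0 <= v).
  { assert (h := Hu 0 (Rle_refl 0)). rewrite Rbar_min_0_l in h; [exact h|].
    apply (m_nonneg B tau Htau). apply B_setI; auto; apply above_measurable. }
  apply NNPP; intro Hn. apply Rbar_not_le_lt in Hn.
  assert (Hb : exists b, v < b /\ Rbar_le (Fin b) (nu A)).
  { destruct (nu A) as [y|].
    - exists y; simpl in *; split; lra.
    - exists (v + 1); split; simpl; auto; lra. }
  destruct Hb as [b [Hvb Hbn]].
  destruct (rat_dense v b) as [m1 [n1 [Hq1 Hq1']]]; auto.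
  destruct (rat_dense (rat m1 n1) b) as [m2 [n2 [Hq2 Hq2']]]; [lra|lra|].
  set (q1 := rat m1 n1) in *. set (q2 := rat m2 n2) in *.
  assert (HAq : B (above q1)) by apply above_measurable.
  (* On {c > q1} nu is below tau, which is <= v; off it, A lies in K m2 n2. *)
  assert (Hhigh : Rbar_le (nu (setI A (above q1))) (Fin q2)).
  { apply (Rbar_le_trans _ _ _ (Hac _ (B_setI B HB _ _ HA HAq))).
    apply (Rbar_le_trans _ (Fin v)); [|simpl; lra].
    apply (Rbar_min_le_below q1); [|lra]. apply Hu. lra. }
  assert (Hlow : Rbar_le (nu (setD A (above q1))) (Fin q2)).
  { apply (Rbar_le_trans _ (nu (K m2 n2))); [|apply HK].
    apply (m_mono B nu Hnu); [apply B_setD; auto | apply K_measurable |].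
    intros x [h1 h2]. apply NNPP; intro h3. apply h2. exists m2, n2. split; auto. }
  assert (Hsplit : A = bigcup (union2 (setI A (above q1)) (setD A (above q1)))).
  { apply set_ext; intro x; unfold bigcup, union2, setI, setD; split.
    - intro h. destruct (classic (above q1 x)); [exists 0%nat|exists 1%nat]; auto.
    - intros [[|j] h]; tauto. }
  assert (Hle : Rbar_le (nu A) (Fin q2)).
  { rewrite Hsplit. apply (m_bigcup_le B nu Hnu).
    - intros [|j]; simpl; [apply B_setI | apply B_setD]; auto.
    - intros [|j]; simpl; auto. }
  apply (Rbar_lt_not_le (Fin q2) (nu A)); auto.
  apply (Rbar_lt_le_trans _ (Fin b)); simpl; auto.
Qed.

Lemma density_represents (A : E -> Prop) :
  abs_cont_min B nu tau -> B A -> sugeno_density tau density A (nu A).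
Proof.
  intros Hac HA. split.
  - intros a [t [Ht ->]]. rewrite density_level; auto. apply sugeno_term_le; auto.
  - intros [v|] Hu; [|apply Rbar_le_PInf].
    apply nu_le_sugeno_bound; auto. intros t Ht.
    rewrite <- density_level by exact Ht. apply Hu. eauto.
Qed.

End PrincipalDensity.

Lemma principal_radon_nikodym (E : Type) (B : (E -> Prop) -> Prop) (HB : sigma_algebra B)
  (tau : (E -> Prop) -> Rbar) (Htau : sigma_maxitive B tau) :
  sigma_principal B tau -> radon_nikodym_sugeno B tau.
Proof.
  intros Hpr nu Hnu Hac.
  assert (Kex : forall m, exists Km, forall n, sublevel B nu (rat m n) (Km n) /\
            forall S, sublevel B nu (rat m n) S -> negligible B tau (setD S (Km n))).
  { intro m. apply (functional_choice (fun n Kmn => sublevel B nu (rat m n) Kmn /\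
      forall S, sublevel B nu (rat m n) S -> negligible B tau (setD S Kmn))).
    intro n. apply Hpr, sublevel_ideal, rat_nonneg; auto. }
  destruct (functional_choice _ Kex) as [K HK].
  exists (density K). split.
  - apply (density_measurable B HB tau nu); auto.
  - intros A HA. apply (density_represents B HB tau nu); auto.
Qed.

Section DensityPrincipal.
Context {E : Type} (B : (E -> Prop) -> Prop) (HB : sigma_algebra B)
  (tau : (E -> Prop) -> Rbar) (Htau : sigma_maxitive B tau)
  (I : (E -> Prop) -> Prop) (HI : sigma_ideal B I).

Lemma ideal_measurable (S : E -> Prop) : I S -> B S.
Proof. apply HI. Qed.

Lemma ideal_empty : I emptyset.
Proof.
  destruct HI as [_ [[A0 HA0] [_ Hsub]]].
  apply (Hsub _ A0); auto. apply B_empty; auto. intros x [].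
Qed.

Definition residual (A : E -> Prop) (a : Rbar) : Prop := exists S, I S /\ a = tau (setD A S).

Definition quotient (A : E -> Prop) : Rbar := Rbar_inf (residual A).

Lemma quotient_spec (A : E -> Prop) : B A -> is_inf (residual A) (quotient A).
Proof.
  intro HA. apply Rbar_inf_spec.
  - exists (tau (setD A emptyset)), emptyset. split; auto. apply ideal_empty.
  - intros a [S [HS ->]]. apply (m_nonneg B tau Htau), B_setD, ideal_measurable; auto.
Qed.

Lemma quotient_nonneg (A : E -> Prop) : B A -> Rbar_le (Fin 0) (quotient A).
Proof.
  intro HA. apply (quotient_spec A HA). intros a [S [HS ->]].
  apply (m_nonneg B tau Htau), B_setD, ideal_measurable; auto.
Qed.

Lemma quotient_le_residual (A S : E -> Prop) :
  B A -> I S -> Rbar_le (quotient A) (tau (setD A S)).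
Proof. intros HA HS. apply (quotient_spec A HA). exists S; auto. Qed.

Lemma quotient_ideal_null (S : E -> Prop) : I S -> quotient S = Fin 0.
Proof.
  intro HS. apply Rbar_le_antisym; [|apply quotient_nonneg, ideal_measurable; auto].
  apply (Rbar_le_trans _ _ _ (quotient_le_residual S S (ideal_measurable S HS) HS)).
  replace (setD S S) with (@emptyset E) by (apply set_ext; intro x; unfold setD, emptyset; tauto).
  rewrite (m_empty B tau Htau). apply Rbar_le_refl.
Qed.

Lemma quotient_approx (A : E -> Prop) (v eps : R) :
  B A -> Rbar_le (quotient A) (Fin v) -> 0 < eps ->
  exists S, I S /\ Rbar_le (tau (setD A S)) (Fin (v + eps)).
Proof.
  intros HA Hv He. destruct (inf_approx _ _ v eps (quotient_spec A HA) Hv He) as [a [[S [HS ->]] Ha]].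
  eauto.
Qed.

(* Countably many approximating members of I are realized by their union. *)
Lemma ideal_common_witness (F : nat -> E -> Prop) (w : nat -> Rbar) :
  (forall j, B (F j)) -> (forall j, exists S, I S /\ Rbar_le (tau (setD (F j) S)) (w j)) ->
  exists L, I L /\ forall j, Rbar_le (tau (setD (F j) L)) (w j).
Proof.
  intros HF Hex. destruct (functional_choice _ Hex) as [G HG].
  assert (HL : I (bigcup G)) by (apply HI; intro j; apply HG).
  exists (bigcup G). split; auto. intro j.
  apply (Rbar_le_trans _ (tau (setD (F j) (G j)))); [|apply HG].
  apply (m_mono B tau Htau).
  - apply B_setD, ideal_measurable; auto.
  - apply B_setD, ideal_measurable; auto. apply HG.
  - intros x [h1 h2]. split; auto. intro; apply h2; exists j; auto.
Qed.

Lemma quotient_sigma_maxitive : sigma_maxitive B quotient.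
Proof.
  split; [exact quotient_nonneg|split].
  { rewrite quotient_ideal_null; auto. apply ideal_empty. }
  intros F HF. assert (HU : B (bigcup F)) by (apply B_bigcup; auto). split.
  - intros a [j ->]. apply (quotient_spec _ HU). intros a [S [HS ->]].
    apply (Rbar_le_trans _ _ _ (quotient_le_residual _ S (HF j) HS)).
    apply (m_mono B tau Htau); try (apply B_setD, ideal_measurable; auto).
    intros x [h1 h2]. split; auto. exists j; auto.
  - intros [v|] Hu; [|apply Rbar_le_PInf]. apply Rbar_le_of_eps. intros eps He.
    destruct (ideal_common_witness F (fun _ => Fin (v + eps))) as [L [HL HLF]]; auto.
    { intro j. apply quotient_approx; auto. apply Hu; eauto. }
    apply (Rbar_le_trans _ _ _ (quotient_le_residual _ L HU HL)).
    replace (setD (bigcup F) L) with (bigcup (fun j => setD (F j) L)).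
    + apply (m_bigcup_le B tau Htau); auto.
      intro j. apply B_setD, ideal_measurable; auto.
    + apply set_ext; intro x; unfold setD, bigcup; split.
      * intros [j [h1 h2]]. split; eauto.
      * intros [[j h1] h2]. exists j; auto.
Qed.

Lemma quotient_abs_cont : abs_cont_min B quotient tau.
Proof.
  intros A HA. simpl. replace (tau A) with (tau (setD A emptyset)).
  - apply quotient_le_residual; auto. apply ideal_empty.
  - f_equal. apply set_ext; intro x; unfold setD, emptyset; tauto.
Qed.

Lemma quotient_null_witness (D : E -> Prop) :
  B D -> Rbar_le (quotient D) (Fin 0) -> exists L, I L /\ tau (setD D L) = Fin 0.
Proof.
  intros HD H0.
  destruct (ideal_common_witness (fun _ => D) (fun n => Fin (/ INR (S n)))) as [L [HL HLD]]; auto.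
  { intro n. destruct (quotient_approx D 0 (/ INR (S n))) as [S HS]; auto.
    - apply inv_succ_pos.
    - exists S. rewrite Rplus_0_l in HS. exact HS. }
  exists L. split; auto. apply Rbar_le_antisym.
  - apply Rbar_le_of_inv_succ, HLD.
  - apply (m_nonneg B tau Htau), B_setD, ideal_measurable; auto.
Qed.

Variable c : E -> Rbar.
Hypothesis Hc : measurable_fun B c.
Hypothesis Hdens : forall A, B A -> sugeno_density tau c A (quotient A).

Definition support : E -> Prop := fun x => Rbar_lt (Fin 0) (c x).

Lemma support_measurable : B support.
Proof. apply Hc; lra. Qed.

Lemma ideal_null_on_support (X : E -> Prop) : I X -> tau (setI X support) = Fin 0.
Proof.
  intro HX. assert (HXB := ideal_measurable X HX).
  assert (Hlev : forall n, B (fun x => Rbar_lt (Fin (/ INR (S n))) (c x)))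
    by (intro n; apply Hc; left; apply inv_succ_pos).
  apply Rbar_le_antisym; [|apply (m_nonneg B tau Htau), B_setI; auto; apply support_measurable].
  replace (setI X support) with
    (bigcup (fun n => setI X (fun x => Rbar_lt (Fin (/ INR (S n))) (c x)))).
  - apply (m_bigcup_le B tau Htau); [intro n; apply B_setI; auto|].
    intro n. apply (Rbar_min_le_below (/ INR (S n))); [|apply inv_succ_pos].
    rewrite <- (quotient_ideal_null X HX). apply (Hdens X HXB).
    exists (/ INR (S n)). split; auto. left; apply inv_succ_pos.
  - rewrite <- setI_bigcup. f_equal. apply set_ext; intro x.
    unfold support, bigcup. rewrite Rbar_pos_inv_succ. tauto.
Qed.

Lemma quotient_null_off_support : Rbar_le (quotient (fun x => ~ support x)) (Fin 0).
Proof.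
  apply (Hdens _ (B_compl B HB _ support_measurable)). intros a [t [Ht ->]].
  replace (setI (fun x => ~ support x) (fun x => Rbar_lt (Fin t) (c x))) with (@emptyset E).
  - rewrite (m_empty B tau Htau). apply Rbar_min_le_r.
  - apply set_ext; intro x; unfold setI, support, emptyset; split; [tauto|].
    intros [h1 h2]. apply h1. apply (Rbar_le_lt_trans _ (Fin t)); simpl; auto.
Qed.

Lemma density_principal_set : exists L, I L /\ forall S, I S -> negligible B tau (setD S L).
Proof.
  assert (HD : B (fun x => ~ support x)) by (apply B_compl, support_measurable; auto).
  destruct (quotient_null_witness _ HD quotient_null_off_support) as [L [HL HL0]].
  exists L. split; auto. intros S HS.
  assert (HSB := ideal_measurable S HS). assert (HLB := ideal_measurable L HL).
  set (N := bigcup (union2 (setI S support) (setD (fun x => ~ support x) L))).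
  assert (HN : B N) by (apply B_union2; auto; [apply B_setI; auto; apply support_measurable
                                                 | apply B_setD; auto]).
  exists N. split; [|split]; auto.
  - apply Rbar_le_antisym; [|apply (m_nonneg B tau Htau); auto].
    apply (m_bigcup_le B tau Htau).
    + intros [|j]; simpl; [apply B_setI; auto; apply support_measurable | apply B_setD; auto].
    + intros [|j]; simpl; [rewrite ideal_null_on_support | rewrite HL0]; auto; apply Rbar_le_refl.
  - intros x [h1 h2]. destruct (classic (support x)); [exists 0%nat | exists 1%nat]; split; auto.
Qed.

End DensityPrincipal.

Lemma radon_nikodym_principal (E : Type) (B : (E -> Prop) -> Prop) (HB : sigma_algebra B)
  (tau : (E -> Prop) -> Rbar) (Htau : sigma_maxitive B tau) :
  radon_nikodym_sugeno B tau -> sigma_principal B tau.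
Proof.
  intros Hrn I HI.
  destruct (Hrn (quotient tau I)) as [c [Hc Hdens]].
  - apply quotient_sigma_maxitive; auto.
  - apply quotient_abs_cont; auto.
  - apply (density_principal_set B HB tau Htau I HI c); auto.
Qed.

Theorem mainTheorem3 (E : Type) (HE : inhabited E)
  (B : (E -> Prop) -> Prop) (HB : sigma_algebra B)
  (tau : (E -> Prop) -> Rbar) (Htau : sigma_maxitive B tau) :
  radon_nikodym_sugeno B tau <-> sigma_principal B tau.
Proof.
  split.
  - apply radon_nikodym_principal; auto.
  - apply principal_radon_nikodym; auto.
Qed.
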